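(* Let $\langle\mathcal G,\widehat{\mathcal P}\rangle$ be a $2\frac12$-player parity game with $\widehat{\mathcal P}=\langle\widehat B_1,\dots,\widehat B_\ell\rangle$, and let $v^0$ be a vertex of $\mathcal G$. Suppose $\pi_0^*$ is a deterministic memoryless strategy of Player 0 such that $\inf_{\pi_1}P_{v^0}^{\pi_0^*,\pi_1}(\mathcal G\models\mathit{Parity}(\widehat{\mathcal P}))=1$, the infimum ranging over all strategies $\pi_1$ of Player 1. Then for every finite run $v^0\dots v^n\in V^*$ for which there exists a Player 1 strategy $\pi_1$ with $P_{v^0}^{\pi_0^*,\pi_1}(\mathcal G\models v^0\dots v^n)>0$, and for every odd $i\in\{1,\dots,\ell\}$, $$v^n\in\widehat B_i\implies\inf_{\pi_1}P_{v^n}^{\pi_0^*,\pi_1}\Big(\mathcal G\models\lozenge\lozenge\big(\square\neg\widehat B_i\vee\textstyle\bigvee_{j\text{ even},\,j\in\{i+1,\dots,\ell\}}\widehat B_j\big)\Big)=1.$$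
   Context: A $2\frac12$-player game graph is $\mathcal G=\langle V,E,\langle V_0,V_1,V_r\rangle\rangle$ with $V$ finite, $E\subseteq V\times V$, and $V_0,V_1,V_r$ a partition of $V$; at $V_0$ (resp. $V_1$) vertices Player 0 (resp. Player 1) chooses a successor, at $V_r$ vertices the successor is chosen uniformly at random among the successors. Strategies of Player $i$ are maps $\pi_i:V^*V_i\to\mathit{Dist}(V)$ supported on successors of the last vertex; deterministic memoryless strategies choose a single successor depending only on the current vertex. $P_v^{\pi_0,\pi_1}$ is the induced probability measure on infinite runs from $v$, and $P_{v^0}^{\pi_0,\pi_1}(\mathcal G\models v^0\dots v^n)$ is the probability that the run begins with $v^0\dots v^n$. A $2\frac12$-player parity game is $\langle\mathcal G,\widehat{\mathcal P}\rangle$ with $\widehat{\mathcal P}=\langle\widehat B_1,\dots,\widehat B_\ell\rangle$ disjoint (possibly empty) subsets of $V$, such that every infinite run visits some nonempty $\widehat B_i$ infinitely often. A run satisfies $\mathit{Parity}(\widehat{\mathcal P})$ iff for every odd $i$, if it visits $\widehat B_i$ infinitely often then it visits $\widehat B_j$ infinitely often for some even $j\in\{i+1,\dots,\ell\}$. Temporal operators $\lozenge,\square$ have standard LTL semantics on runs. *)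

From HB Require Import structures.
From mathcomp Require Import all_boot all_order all_algebra.
From mathcomp Require Import all_classical all_reals all_analysis.
Set Implicit Arguments. Unset Strict Implicit. Unset Printing Implicit Defensive.
Import Order.TTheory GRing.Theory Num.Theory numFieldNormedType.Exports.
Local Open Scope ring_scope.

Section ParityGames.
Variables (R : realType) (V : finType).

Definition game_graph (E : rel V) (V0 V1 Vr : {set V}) : Prop :=
  [/\ [disjoint V0 & V1], [disjoint V0 & Vr], [disjoint V1 & Vr],
      (V0 :|: V1 :|: Vr = [set: V])%SET & forall v, exists w, E v w].

Definition inf_run (E : rel V) (r : nat -> V) : Prop := forall k, E (r k) (r k.+1).

Definition inf_often (r : nat -> V) (A : {set V}) : Prop :=
  forall N, exists m, (N <= m)%N /\ r m \in A.

(** Priority sets B_1, ..., B_l (indices 1..l meaningful), pairwise disjoint,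
    and every infinite run visits some nonempty B_i infinitely often. *)
Definition parity_condition (E : rel V) (l : nat) (B : nat -> {set V}) : Prop :=
  (forall i j, (1 <= i <= l)%N -> (1 <= j <= l)%N -> i != j -> [disjoint B i & B j])
  /\ (forall r, inf_run E r ->
        exists i, [/\ (1 <= i <= l)%N, B i != finset.set0 & inf_often r (B i)]).

Definition Parity (l : nat) (B : nat -> {set V}) : set (nat -> V) :=
  [set r | forall i, (1 <= i <= l)%N -> odd i -> inf_often r (B i) ->
             exists j, [/\ (i < j <= l)%N, ~~ odd j & inf_often r (B j)]].

(** Strategies of a player owning vertices Vi: a history is a nonempty
    sequence [rcons h x] (x = current vertex); it maps to a distribution
    on V supported on successors of x. *)
Definition strategy (E : rel V) (Vi : {set V}) (pi : seq V -> V -> R) : Prop :=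
  forall h x, x \in Vi ->
    [/\ forall w, 0 <= pi (rcons h x) w,
        forall w, pi (rcons h x) w != 0 -> E x w
      & \sum_(w : V) pi (rcons h x) w = 1].

Definition det_memoryless (E : rel V) (V0 : {set V}) (pi : seq V -> V -> R) : Prop :=
  exists sigma : V -> V,
    (forall x, x \in V0 -> E x (sigma x)) /\
    (forall h x w, x \in V0 -> pi (rcons h x) w = (w == sigma x)%:R).

Definition step (E : rel V) (V0 V1 : {set V}) (pi0 pi1 : seq V -> V -> R)
  (h : seq V) (x w : V) : R :=
  if x \in V0 then pi0 (rcons h x) w
  else if x \in V1 then pi1 (rcons h x) w
  else (E x w)%:R / #|[set y | E x y]%SET|%:R.

Definition cyl (w : seq V) : set (nat -> V) :=
  [set r | forall k, (k < size w)%N -> r k = nth (r k) w k].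

Definition cylprob (E : rel V) (V0 V1 : {set V}) (pi0 pi1 : seq V -> V -> R)
  (v : V) (w : seq V) : R :=
  match w with
  | [::] => 1
  | x0 :: _ => (x0 == v)%:R *
      \prod_(k < (size w).-1)
         step E V0 V1 pi0 pi1 (take k w) (nth x0 w k) (nth x0 w k.+1)
  end.

Local Open Scope classical_set_scope.
Definition run_measurable : set (set (nat -> V)) := <<s [set cyl w | w in [set: seq V]] >>.

(** P is the probability measure P_v^{pi0,pi1} on infinite runs: a
    countably additive probability on the cylinder sigma-algebra with the
    prescribed cylinder probabilities (it exists and is unique). *)
Definition run_measure (E : rel V) (V0 V1 : {set V}) (pi0 pi1 : seq V -> V -> R)
  (v : V) (P : set (nat -> V) -> R) : Prop :=
  [/\ P setT = 1,
      forall A, run_measurable A -> 0 <= P A,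
      forall F : nat -> set (nat -> V), (forall k, run_measurable (F k)) ->
        trivIset setT F ->
        (fun n => \sum_(0 <= k < n) P (F k)) @ \oo --> P (\bigcup_k F k)
    & forall w, P (cyl w) = cylprob E V0 V1 pi0 pi1 v w].

Definition prob_values (E : rel V) (V0 V1 : {set V}) (pi0 : seq V -> V -> R)
  (v : V) (A : set (nat -> V)) : set R :=
  [set x | exists pi1, strategy E V1 pi1 /\
             exists P, run_measure E V0 V1 pi0 pi1 v P /\ x = P A].

(** The event <> <> ( [] ~B_i \/ \/_{j even, i<j<=l} B_j ) (LTL, at position 0). *)
Definition lemma3_event (l : nat) (B : nat -> {set V}) (i : nat) : set (nat -> V) :=
  [set r | exists k, exists k', (k <= k')%N /\
     ((forall m, (k' <= m)%N -> r m \notin B i) \/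
      exists j, [/\ (i < j <= l)%N, ~~ odd j & r k' \in B j])].

End ParityGames.

(* Write the reached history v0 :: ws as rcons p x and let C be its cylinder,
   so that c := P(C) > 0.  Given any Player 1 strategy from x with run measure
   P', let Player 1 follow the original strategy until C is entered and the new
   one afterwards; the run measure of this glued strategy is
   A |-> P(A \ C) + c P'(runs from x whose concatenation with p lies in A).
   Parity is prefix-independent and pi0 wins almost surely from v0, so
   1 <= (1 - c) + c P'(Parity), hence P'(Parity) = 1, and Parity implies the
   event.  Conditioning P on C and dropping p shows that the set of values is
   nonempty (inf of the empty set is 0), so its infimum is 1. *)

From HB Require Import structures.
From mathcomp Require Import all_boot all_order all_algebra.
From mathcomp Require Import all_classical all_reals all_analysis.
Import Order.TTheory GRing.Theory Num.Theory numFieldNormedType.Exports.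
Local Open Scope classical_set_scope.
Local Open Scope ring_scope.
Set Implicit Arguments. Unset Strict Implicit. Unset Printing Implicit Defensive.

Section Runs.
Variable V : finType.
Implicit Types (r : nat -> V) (s t u w : seq V) (B : nat -> {set V}).

Definition dropr n r : nat -> V := fun k => r (n + k)%N.
Definition consr (y : V) r : nat -> V := fun k => if k is k'.+1 then r k' else y.
Definition catr (p : seq V) r : nat -> V := foldr consr r p.

Lemma dropr0 r : dropr 0 r = r.
Proof. by []. Qed.

Lemma dropr_dropr m n r : dropr m (dropr n r) = dropr (n + m) r.
Proof. by apply: funext => k; rewrite /dropr addnA. Qed.

Lemma dropr1_consr y r : dropr 1 (consr y r) = r.
Proof. by []. Qed.

Lemma dropr_catr p r : dropr (size p) (catr p r) = r.
Proof.
by elim: p => [//|y p IHp] /=; rewrite -add1n -dropr_dropr dropr1_consr IHp.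
Qed.

Lemma cyl_nil : cyl [::] = [set: nat -> V].
Proof. by apply/seteqP; split. Qed.

Lemma cyl_cons y w r : cyl (y :: w) r <-> r 0%N = y /\ cyl w (dropr 1 r).
Proof.
split=> [h | [r0 h] [|k] /=]; last 2 first.
- by rewrite r0.
- by rewrite ltnS => /h.
by split=> [|k hk]; [exact: (h 0%N) | exact: (h k.+1)].
Qed.

Lemma cyl_cat s t r : cyl (s ++ t) r <-> cyl s r /\ cyl t (dropr (size s) r).
Proof.
elim: s r => [|y s IHs] r /=; first by rewrite dropr0; split=> [|[]].
rewrite !cyl_cons IHs dropr_dropr add1n.
by split=> [[-> []] | [[-> ?] ?]].
Qed.

Lemma cyl_catE s t : cyl (s ++ t) = cyl s `&` dropr (size s) @^-1` cyl t.
Proof. by apply/seteqP; split=> r /cyl_cat. Qed.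

Lemma cyl_catr p w r : cyl (p ++ w) (catr p r) <-> cyl w r.
Proof. by elim: p => [//|y p IHp] /=; rewrite cyl_cons IHp; split=> [[]|]. Qed.

Lemma catr_preimage_cyl p w : catr p @^-1` cyl (p ++ w) = cyl w.
Proof. by apply/seteqP; split=> r /= /cyl_catr. Qed.

Lemma cyl_prefix s t : prefix s t -> cyl t `<=` cyl s.
Proof. by move=> /prefixP[t' ->] r /cyl_cat[]. Qed.

Lemma cyl_disjoint s t : ~~ prefix s t -> ~~ prefix t s -> cyl s `&` cyl t = set0.
Proof.
elim: s t => [|a s IHs] [|b t] //=.
rewrite !(eq_sym b) => ns nt; apply/seteqP; split=> // r [/cyl_cons[ra rs] /cyl_cons[rb rt]].
move: ns nt; rewrite -ra -rb eqxx /= => ns nt.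
have /seteqP[sub _] := IHs t ns nt.
exact: (sub (dropr 1 r)).
Qed.

Lemma inf_often_dropr n r (A : {set V}) : inf_often (dropr n r) A <-> inf_often r A.
Proof.
split=> h N.
  have [m [hNm hm]] := h N.
  by exists (n + m)%N; split; first exact: leq_trans hNm (leq_addl _ _).
have [m [hNm hm]] := h (n + N)%N.
have hnm : (n <= m)%N := leq_trans (leq_addr _ _) hNm.
by exists (m - n)%N; rewrite /dropr subnKC // leq_subRL.
Qed.

Lemma inf_often_catr p r (A : {set V}) : inf_often (catr p r) A <-> inf_often r A.
Proof. by rewrite -{2}(dropr_catr p r) inf_often_dropr. Qed.

Lemma Parity_catr p l B : catr p @^-1` Parity l B = Parity l B.
Proof.
apply/seteqP; split=> r h i il io /inf_often_catr /(h i il io) [j [jl je rj]];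
  by exists j; split => //; apply/inf_often_catr.
Qed.

Lemma Parity_sub_lemma3_event l B i : (1 <= i <= l)%N -> odd i ->
  Parity l B `<=` lemma3_event l B i.
Proof.
move=> il io r h; have [/(h i il io) [j [jl je /(_ 0%N) [m [_ hm]]]] | nio] :=
  pselect (inf_often r (B i)).
  by exists 0%N, m; split => //; right; exists j.
have [N hN] : exists N, forall m, (N <= m)%N -> r m \notin B i.
  apply: contra_notP nio => /forallNP hN N.
  have /existsNP[m /not_implyP[Nm /negP/negPn rm]] := hN N.
  by exists m.
by exists 0%N, N; split => //; left.
Qed.

End Runs.

Section RunMeasurable.
Variable V : finType.
Implicit Types (A D : set (nat -> V)) (u : seq V) (B : nat -> {set V}).
Local Notation M := (@run_measurable V).

Lemma run_measurable0 : M set0.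
Proof. exact: sigma_algebra0. Qed.

Lemma run_measurableC A : M A -> M (~` A).
Proof. by rewrite -setTD; exact: sigma_algebraCD. Qed.

Lemma run_measurableT : M setT.
Proof. by rewrite -setC0; exact: (run_measurableC run_measurable0). Qed.

Lemma run_measurable_bigcup (F : nat -> set (nat -> V)) :
  (forall k, M (F k)) -> M (\bigcup_k F k).
Proof. exact: sigma_algebra_bigcup. Qed.

Lemma run_measurable_bigcap (F : nat -> set (nat -> V)) :
  (forall k, M (F k)) -> M (\bigcap_k F k).
Proof.
move=> mF; rewrite -[X in M X]setCK setC_bigcap.
by apply: run_measurableC; apply: run_measurable_bigcup => k; exact: run_measurableC.
Qed.

Lemma run_measurableU A D : M A -> M D -> M (A `|` D).
Proof.
move=> mA mD; rewrite -bigcup2E; apply: run_measurable_bigcup => -[|[|k]] //=.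
exact: run_measurable0.
Qed.

Lemma run_measurableI A D : M A -> M D -> M (A `&` D).
Proof.
move=> mA mD; rewrite -[X in M X]setCK setCI.
by apply: run_measurableC; apply: run_measurableU; exact: run_measurableC.
Qed.

Lemma run_measurableD A D : M A -> M D -> M (A `\` D).
Proof. by move=> mA mD; rewrite setDE; exact: run_measurableI (run_measurableC mD). Qed.

Lemma run_measurable_fin_bigcup (I : finType) (F : I -> set (nat -> V)) :
  (forall i, M (F i)) -> M (\bigcup_i F i).
Proof.
move=> mF; have -> : \bigcup_i F i = \big[setU/set0]_(i <- enum I) F i.
  by rewrite -bigcup_seq; apply: eq_bigcupl; split=> i // _; rewrite /= mem_enum.
by elim/big_ind: _ => //; [exact: run_measurable0 | exact: run_measurableU].
Qed.

Lemma run_measurable_cyl u : M (cyl u).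
Proof. by apply: sub_sigma_algebra; exists u. Qed.

Lemma run_measurable_preimage (f : (nat -> V) -> nat -> V) :
  (forall u, M (f @^-1` cyl u)) -> forall A, M A -> M (f @^-1` A).
Proof.
move=> mf; apply: (@smallest_sub _ _ _ [set A | M (f @^-1` A)]); last first.
  by move=> _ [u _ <-]; exact: mf.
split=> [|A mA|F mF] /=.
- by rewrite preimage_set0; exact: run_measurable0.
- by rewrite setTD preimage_setC; exact: run_measurableC.
- by rewrite preimage_bigcup; exact: run_measurable_bigcup.
Qed.

Lemma dropr_preimage_cyl n u :
  dropr n @^-1` cyl u = \bigcup_(t : n.-tuple V) cyl (t ++ u).
Proof.
apply/seteqP; split=> [r hr | r [t _ /cyl_cat[_]]]; last by rewrite size_tuple.
exists [tuple r k | k < n] => //; apply/cyl_cat; rewrite size_tuple; split => //.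
move=> k; rewrite size_tuple => kn.
by have := tnth_mktuple (fun i : 'I_n => r i) (Ordinal kn); rewrite (tnth_nth (r k)) => ->.
Qed.

Lemma run_measurable_dropr n A : M A -> M (dropr n @^-1` A).
Proof.
apply: run_measurable_preimage => u; rewrite dropr_preimage_cyl.
by apply: run_measurable_fin_bigcup => t; exact: run_measurable_cyl.
Qed.

Lemma consr_preimage_cyl y u : consr y @^-1` cyl u =
  if u is z :: u' then (if z == y then cyl u' else set0) else setT.
Proof.
case: u => [|z u]; first by apply/seteqP; split.
apply/seteqP; split=> r; first by move=> /cyl_cons[/= -> ?]; rewrite eqxx.
by case: eqP => // <- ?; exact/cyl_cons.
Qed.

Lemma run_measurable_catr p A : M A -> M (catr p @^-1` A).
Proof.
elim: p A => [//|y p IHp] A mA; rewrite [catr _]/= -/(catr p).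
change (M (catr p @^-1` (consr y @^-1` A))); apply: IHp; move: A mA.
apply: run_measurable_preimage => u; rewrite consr_preimage_cyl.
case: u => [|z u]; first exact: run_measurableT.
by case: eqP => _; [exact: run_measurable_cyl | exact: run_measurable0].
Qed.

Lemma run_measurable_at m (A : {set V}) : M [set r | r m \in A].
Proof.
have -> : [set r | r m \in A] =
    dropr m @^-1` \bigcup_(y : V) (if y \in A then cyl [:: y] else set0).
  apply/seteqP; split=> r /=.
    by move=> rA; exists (r m) => //; rewrite rA; apply/cyl_cons; rewrite /dropr addn0.
  by case=> y _; case: ifP => // yA /cyl_cons[]; rewrite /dropr addn0 => ->.
apply: run_measurable_dropr; apply: run_measurable_fin_bigcup => y.
by case: ifP => _; [exact: run_measurable_cyl | exact: run_measurable0].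
Qed.

Lemma run_measurable_inf_often (A : {set V}) : M [set r | inf_often r A].
Proof.
have -> : [set r | inf_often r A] =
    \bigcap_N \bigcup_m (if (N <= m)%N then [set r | r m \in A] else set0).
  apply/seteqP; split=> r h N.
    by have [m [Nm rm]] := h N; exists m => //; rewrite Nm.
  by have [m _] := h N I; case: ifP => // Nm rm; exists m.
apply: run_measurable_bigcap => N; apply: run_measurable_bigcup => m.
by case: ifP => _; [exact: run_measurable_at | exact: run_measurable0].
Qed.

Lemma run_measurable_Parity l B : M (Parity l B).
Proof.
have -> : Parity l B = \bigcap_i
    if (1 <= i <= l)%N && odd i then
      ~` [set r | inf_often r (B i)] `|`
      \bigcup_j (if (i < j <= l)%N && ~~ odd j then [set r | inf_often r (B j)] else set0)
    else setT.
  apply/seteqP; split=> r h i.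
    case: ifP => // /andP[il io] _.
    have [/(h i il io)[j [jl je rj]] | ] := pselect (inf_often r (B i)); last by left.
    by right; exists j => //; rewrite jl je.
  move=> il io ri; have := h i I; rewrite il io => -[//|[j _]].
  by case: ifP => // /andP[jl je] rj; exists j.
apply: run_measurable_bigcap => i; case: ifP => _; last exact: run_measurableT.
apply: run_measurableU; first exact: run_measurableC (run_measurable_inf_often _).
apply: run_measurable_bigcup => j.
by case: ifP => _; [exact: run_measurable_inf_often | exact: run_measurable0].
Qed.

Lemma run_measurable_lemma3_event l B i : M (lemma3_event l B i).
Proof.
have -> : lemma3_event l B i = \bigcup_k
    ((\bigcap_m (if (k <= m)%N then ~` [set r | r m \in B i] else setT)) `|`
     \bigcup_j (if (i < j <= l)%N && ~~ odd j then [set r | r k \in B j] else set0)).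
  apply/seteqP; split=> r.
    case=> _ [k [_ [h | [j [jl je rj]]]]]; exists k => //.
      by left => m _; case: ifP => // /h /negP.
    by right; exists j => //; rewrite jl je.
  case=> k _ [h | [j _]].
    by exists 0%N, k; split => //; left => m km; apply/negP; have := h m I; rewrite km.
  by case: ifP => // /andP[jl je] rj; exists 0%N, k; split => //; right; exists j.
apply: run_measurable_bigcup => k; apply: run_measurableU.
  apply: run_measurable_bigcap => m.
  by case: ifP => _; [exact: run_measurableC (run_measurable_at _ _) | exact: run_measurableT].
apply: run_measurable_bigcup => j.
by case: ifP => _; [exact: run_measurable_at | exact: run_measurable0].
Qed.

End RunMeasurable.

Section RunProbability.
Variables (R : realType) (V : finType).
Implicit Types (A D : set (nat -> V)) (P Q : set (nat -> V) -> R).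
Local Notation M := (@run_measurable V).

Definition run_sigma_additive P : Prop :=
  forall F : nat -> set (nat -> V), (forall k, M (F k)) -> trivIset setT F ->
    (fun n => \sum_(0 <= k < n) P (F k)) @ \oo --> P (\bigcup_k F k).

Definition run_probability P : Prop :=
  [/\ P setT = 1, forall A, M A -> 0 <= P A & run_sigma_additive P].

Lemma run_measure_probability E V0 V1 pi0 pi1 v P :
  run_measure E V0 V1 pi0 pi1 v P -> run_probability P.
Proof. by case. Qed.

Lemma run_sigma_additive_preimage P D (f : (nat -> V) -> nat -> V) :
  run_sigma_additive P -> M D -> (forall A, M A -> M (f @^-1` A)) ->
  run_sigma_additive (fun A => P (D `&` f @^-1` A)).
Proof.
move=> P_add mD mf F mF tF; rewrite preimage_bigcup setI_bigcupr.
apply: P_add => [k | i j _ _ [r [[_ hi] [_ hj]]]]; first exact: run_measurableI (mf _ (mF k)).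
by apply: tF => //; exists (f r).
Qed.

Lemma run_sigma_additiveD P Q : run_sigma_additive P -> run_sigma_additive Q ->
  run_sigma_additive (fun A => P A + Q A).
Proof.
move=> P_add Q_add F mF tF; under eq_fun do rewrite big_split.
exact: cvgD (P_add F mF tF) (Q_add F mF tF).
Qed.

Lemma run_sigma_additiveZ c P : run_sigma_additive P ->
  run_sigma_additive (fun A => c * P A).
Proof.
move=> P_add F mF tF; under eq_fun do rewrite -mulr_sumr.
exact: cvgMl_tmp (P_add F mF tF).
Qed.

Variables (P : set (nat -> V) -> R) (hP : run_probability P).
Let P_setT : P setT = 1. Proof. by case: hP. Qed.
Let P_ge0 A : M A -> 0 <= P A. Proof. by case: hP => _ + _; apply. Qed.
Let P_add : run_sigma_additive P. Proof. by case: hP. Qed.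

Lemma prob_set0 : P set0 = 0.
Proof.
have := P_add (fun=> @run_measurable0 V) (@trivIset_set0 _ _ setT).
rewrite bigcup0 // => hsum.
have hsumS := hsum; rewrite -cvg_shiftS in hsumS.
have : (fun n => \sum_(0 <= k < n.+1) P set0 - \sum_(0 <= k < n) P set0) @ \oo -->
    P set0 - P set0 by exact: cvgB.
under eq_fun do rewrite big_nat_recr //= addrAC subrr add0r.
by rewrite subrr => h; exact: cvg_unique _ (cvg_cst _) h.
Qed.

Lemma prob_setU A D : M A -> M D -> A `&` D = set0 -> P (A `|` D) = P A + P D.
Proof.
move=> mA mD AD0; rewrite trivIset_bigcup2 in AD0.
have mAD k : M (bigcup2 A D k) by case: k => [|[|k]] //=; exact: run_measurable0.
have := P_add mAD AD0; rewrite bigcup2E -(cvg_shiftn 2) => hsum.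
suff : (fun n => \sum_(0 <= k < n + 2) P (bigcup2 A D k)) @ \oo --> P A + P D.
  exact: cvg_unique _ hsum.
under eq_fun do rewrite addn2 !big_nat_recl //= big1 ?prob_set0 ?addr0 //.
exact: cvg_cst.
Qed.

Lemma le_prob A D : M A -> M D -> A `<=` D -> P A <= P D.
Proof.
move=> mA mD AD; rewrite -(setDUK AD) prob_setU ?setDIK //; last exact: run_measurableD.
by rewrite lerDl P_ge0 //; exact: run_measurableD.
Qed.

Lemma prob_setD A D : M A -> M D -> D `<=` A -> P (A `\` D) = P A - P D.
Proof.
move=> mA mD DA; rewrite -{2}(setDUK DA) prob_setU ?setDIK //.
  by rewrite addrAC subrr add0r.
exact: run_measurableD.
Qed.

Lemma prob_le1 A : M A -> P A <= 1.
Proof. by move=> mA; rewrite -P_setT le_prob //; exact: run_measurableT. Qed.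

Lemma prob_subset_eq1 A D : M A -> M D -> A `<=` D -> P A = 1 -> P D = 1.
Proof. by move=> mA mD AD PA1; apply/le_anti; rewrite prob_le1 //= -PA1 le_prob. Qed.

Lemma prob_setC A : M A -> P (~` A) = 1 - P A.
Proof. by move=> mA; rewrite -setTD prob_setD ?P_setT //; exact: run_measurableT. Qed.

End RunProbability.

Section CylinderProbabilities.
Variables (R : realType) (V : finType) (E : rel V) (V0 V1 : {set V}).
Implicit Types (pi : seq V -> V -> R) (h p u w : seq V) (v x y z : V).
Local Notation step := (step E V0 V1).
Local Notation cylprob := (cylprob E V0 V1).

Definition shift_strategy p pi : seq V -> V -> R := fun s => pi (p ++ s).

Lemma strategy_shift (Vi : {set V}) p pi :
  strategy E Vi pi -> strategy E Vi (shift_strategy p pi).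
Proof. by move=> hpi h z hz; rewrite /shift_strategy -rcons_cat; exact: hpi. Qed.

Lemma step_cat pi0 pi1 p h z y :
  step pi0 pi1 (p ++ h) z y = step (shift_strategy p pi0) (shift_strategy p pi1) h z y.
Proof. by rewrite /step /shift_strategy rcons_cat. Qed.

Lemma cylprob_cons2 pi0 pi1 v x0 x1 w :
  cylprob pi0 pi1 v [:: x0, x1 & w] = (x0 == v)%:R * step pi0 pi1 [::] x0 x1 *
    cylprob (shift_strategy [:: x0] pi0) (shift_strategy [:: x0] pi1) x1 (x1 :: w).
Proof.
rewrite /cylprob /= big_ord_recl eqxx mul1r mulrA; congr (_ * _).
apply: eq_bigr => k _; rewrite lift0 -step_cat /=.
by congr step; apply: set_nth_default; [rewrite /= ltnS; exact: ltnW | exact: ltn_ord].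
Qed.

Lemma cylprob1 pi0 pi1 x : cylprob pi0 pi1 x [:: x] = 1.
Proof. by rewrite /cylprob /= big_ord0 eqxx mulr1. Qed.

Lemma cylprob_cat pi0 pi1 v p x u :
  cylprob pi0 pi1 v (p ++ x :: u) = cylprob pi0 pi1 v (rcons p x) *
    cylprob (shift_strategy p pi0) (shift_strategy p pi1) x (x :: u).
Proof.
elim: p v pi0 pi1 => [|y p IHp] v pi0 pi1.
  by rewrite /cylprob /= big_ord0 eqxx !mulr1 mul1r.
case: p IHp => [|z p] IHp; rewrite [_ ++ _]/= [rcons _ _]/= !cylprob_cons2.
  by rewrite cylprob1 !mulr1.
by rewrite IHp mulrA.
Qed.

Lemma cylprob_shift_memoryless pi0 pi1 p v w : det_memoryless E V0 pi0 ->
  cylprob (shift_strategy p pi0) pi1 v w = cylprob pi0 pi1 v w.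
Proof.
move=> [sigma [_ pi0E]]; case: w => [//|x0 w]; rewrite /cylprob; congr (_ * _).
apply: eq_bigr => k _; rewrite /step /shift_strategy -rcons_cat.
by case: ifP => // hV0; rewrite !pi0E.
Qed.

Lemma eq_cylprob pi0 pi1 pi1' v w :
    (forall m, (0 < m < size w)%N -> pi1 (take m w) =1 pi1' (take m w)) ->
  cylprob pi0 pi1 v w = cylprob pi0 pi1' v w.
Proof.
case: w => [//|x0 w] pi1E; rewrite /cylprob; congr (_ * _); apply: eq_bigr => k _.
have kw : (k < size w)%N := ltn_ord k.
rewrite /step -(take_nth x0); last by rewrite ltnS ltnW.
by rewrite (pi1E k.+1) //= ltnS kw.
Qed.

Definition glue_strategy p x pi pi' : seq V -> V -> R :=
  fun s => if prefix (rcons p x) s then pi' (drop (size p) s) else pi s.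

Lemma strategy_glue (Vi : {set V}) p x pi pi' :
  strategy E Vi pi -> strategy E Vi pi' -> strategy E Vi (glue_strategy p x pi pi').
Proof.
move=> hpi hpi' h z hz; rewrite /glue_strategy; case: ifP => [/size_prefix | _].
  by rewrite !size_rcons ltnS => ph; rewrite drop_rcons //; exact: hpi'.
exact: hpi.
Qed.

Lemma cylprob_glue_notprefix pi0 pi1 pi1' p x v u : ~~ prefix (rcons p x) u ->
  cylprob pi0 (glue_strategy p x pi1 pi1') v u = cylprob pi0 pi1 v u.
Proof.
move=> npu; apply: eq_cylprob => m _ y; rewrite /glue_strategy ifN //.
by apply: contra npu => pu; exact: prefix_trans pu (prefix_take _ _).
Qed.

Lemma cylprob_glue_rcons pi0 pi1 pi1' p x v :
  cylprob pi0 (glue_strategy p x pi1 pi1') v (rcons p x) = cylprob pi0 pi1 v (rcons p x).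
Proof.
apply: eq_cylprob => m /andP[_ m_lt] y; rewrite /glue_strategy ifN //.
by apply/negP => /size_prefix; rewrite size_take m_lt leqNgt m_lt.
Qed.

Lemma cylprob_glue_cat pi0 pi1 pi1' p x v u : det_memoryless E V0 pi0 ->
  cylprob pi0 (glue_strategy p x pi1 pi1') v (p ++ x :: u) =
  cylprob pi0 pi1 v (rcons p x) * cylprob pi0 pi1' x (x :: u).
Proof.
move=> mem0; rewrite cylprob_cat cylprob_glue_rcons cylprob_shift_memoryless //.
congr (_ * _); apply: eq_cylprob => -[//|m] _ y.
by rewrite /shift_strategy /glue_strategy /= -cat_rcons prefix_prefix cat_rcons drop_size_cat.
Qed.

End CylinderProbabilities.

Section ReachedCylinder.
Variables (R : realType) (V : finType) (E : rel V) (V0 V1 : {set V}).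
Variables (pi0 pi1 : seq V -> V -> R) (v0 x : V) (p : seq V) (P : set (nat -> V) -> R).
Hypotheses (mem0 : det_memoryless E V0 pi0) (hP : run_measure E V0 V1 pi0 pi1 v0 P).
Local Notation C := (cyl (rcons p x)).
Hypothesis C_gt0 : 0 < P C.
Local Notation M := (@run_measurable V).

Let hPprob : run_probability P := run_measure_probability hP.
Let P_cyl u : P (cyl u) = cylprob E V0 V1 pi0 pi1 v0 u. Proof. by case: hP. Qed.
Let mC : M C := run_measurable_cyl _.

Definition cond_shift_prob (A : set (nat -> V)) : R :=
  (P C)^-1 * P (C `&` dropr (size p) @^-1` A).

Lemma cyl_rcons_dropr_cons u :
  C `&` dropr (size p) @^-1` cyl (x :: u) = cyl (p ++ x :: u).
Proof.
rewrite -cats1 cyl_catE -setIA -preimage_setI cyl_catE.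
by rewrite (setIidr (@cyl_prefix _ [:: x] (x :: u) _)) //= eqxx prefix0s.
Qed.

Lemma cyl_rcons_dropr_neq y u : y != x ->
  C `&` dropr (size p) @^-1` cyl (y :: u) = set0.
Proof.
move=> yx; rewrite -cats1 cyl_catE -setIA -preimage_setI cyl_disjoint ?preimage_set0 ?setI0 //=.
  by rewrite eq_sym (negbTE yx).
by rewrite (negbTE yx).
Qed.

Lemma run_measure_cond_shift :
  run_measure E V0 V1 pi0 (shift_strategy p pi1) x cond_shift_prob.
Proof.
have [P1 P_ge0 P_add] := hPprob; have cN0 : P C != 0 by rewrite gt_eqF.
split.
- by rewrite /cond_shift_prob preimage_setT setIT mulVf.
- move=> A mA; apply: mulr_ge0; first by rewrite invr_ge0 ltW.
  apply: P_ge0; apply: run_measurableI mC _; exact: run_measurable_dropr.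
- exact: run_sigma_additiveZ (run_sigma_additive_preimage P_add mC
                                  (@run_measurable_dropr _ (size p))).
case=> [|y u]; rewrite /cond_shift_prob.
  by rewrite cyl_nil preimage_setT setIT mulVf.
have [->|yx] := eqVneq y x.
  rewrite cyl_rcons_dropr_cons (P_cyl (p ++ _)) cylprob_cat -P_cyl.
  by rewrite cylprob_shift_memoryless // mulKf.
by rewrite cyl_rcons_dropr_neq // prob_set0 // mulr0 /cylprob (negbTE yx) mul0r.
Qed.

Variables (pi1' : seq V -> V -> R) (P' : set (nat -> V) -> R).
Hypothesis hP' : run_measure E V0 V1 pi0 pi1' x P'.

Let hP'prob : run_probability P' := run_measure_probability hP'.
Let P'_cyl u : P' (cyl u) = cylprob E V0 V1 pi0 pi1' x u. Proof. by case: hP'. Qed.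

Definition glue_prob (A : set (nat -> V)) : R :=
  P (~` C `&` A) + P C * P' (cyl [:: x] `&` catr p @^-1` A).

Lemma cyl1_catr_preimage A : cyl [:: x] `&` catr p @^-1` A = catr p @^-1` (C `&` A).
Proof. by rewrite preimage_setI -cats1 catr_preimage_cyl. Qed.

Lemma glue_prob_cyl u :
  glue_prob (cyl u) = cylprob E V0 V1 pi0 (glue_strategy p x pi1 pi1') v0 u.
Proof.
rewrite /glue_prob cyl1_catr_preimage.
have [/prefixP[t ->] | npu] := boolP (prefix (rcons p x) u).
  have sub : cyl (rcons p x ++ t) `<=` C by exact: cyl_prefix (prefix_prefix _ _).
  rewrite (setIidr sub) setIC (proj1 (subsets_disjoint _ _) sub) prob_set0 // add0r.
  by rewrite cat_rcons catr_preimage_cyl P'_cyl cylprob_glue_cat // -P_cyl.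
rewrite cylprob_glue_notprefix // -P_cyl setIC -setDE.
have [pu | npu'] := boolP (prefix u (rcons p x)).
  have catrC : catr p @^-1` C = cyl [:: x] by rewrite -cats1 catr_preimage_cyl.
  have sub := cyl_prefix pu; rewrite (setIidl sub) catrC P'_cyl cylprob1 mulr1.
  by rewrite prob_setD ?subrK //; exact: run_measurable_cyl.
have disj := cyl_disjoint npu npu'.
by rewrite setDidl ?disj ?preimage_set0 ?prob_set0 ?mulr0 ?addr0 // setIC.
Qed.

Lemma run_measure_glue :
  run_measure E V0 V1 pi0 (glue_strategy p x pi1 pi1') v0 glue_prob.
Proof.
have [P1 P_ge0 P_add] := hPprob; have [P'1 P'_ge0 P'_add] := hP'prob.
have mx : M (cyl [:: x]) := run_measurable_cyl _.
split=> [|A mA||]; last exact: glue_prob_cyl.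
- by rewrite /glue_prob preimage_setT !setIT prob_setC // P'_cyl cylprob1 mulr1 subrK.
- apply: addr_ge0; first by apply: P_ge0; exact: run_measurableI (run_measurableC mC) mA.
  apply: mulr_ge0; first exact: ltW.
  by apply: P'_ge0; apply: run_measurableI mx _; exact: run_measurable_catr.
- have sa1 : run_sigma_additive (fun A => P (~` C `&` A)).
    exact: (run_sigma_additive_preimage (f := id) P_add (run_measurableC mC) (fun A mA => mA)).
  have sa2 := run_sigma_additiveZ (c := P C)
    (run_sigma_additive_preimage P'_add mx (@run_measurable_catr _ p)).
  exact: run_sigma_additiveD sa1 sa2.
Qed.

Lemma glue_prob_Parity_le l B :
  glue_prob (Parity l B) <= 1 - P C + P C * P' (Parity l B).
Proof.
have mPar := run_measurable_Parity l B.
rewrite /glue_prob Parity_catr -(prob_setC hPprob mC); apply: lerD.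
  apply: (le_prob hPprob); last exact: subIsetl.
  - exact: run_measurableI (run_measurableC mC) mPar.
  - exact: run_measurableC.
apply: ler_wpM2l; first exact: ltW.
apply: (le_prob hP'prob _ mPar); last exact: subIsetr.
exact: run_measurableI (run_measurable_cyl _) mPar.
Qed.

Lemma Parity_almost_sure_from_reached l B :
  strategy E V1 pi1 -> strategy E V1 pi1' ->
  inf (prob_values E V0 V1 pi0 v0 (Parity l B)) = 1 -> P' (Parity l B) = 1.
Proof.
move=> hpi1 hpi1' inf_Parity.
have glue_Parity_ge1 : 1 <= glue_prob (Parity l B).
  rewrite -inf_Parity; apply: ge_inf.
    exists 0 => _ [pi [_ [Q [[_ Q_ge0 _ _] ->]]]]; exact: Q_ge0 (run_measurable_Parity _ _).
  exists (glue_strategy p x pi1 pi1'); split; first exact: strategy_glue.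
  by exists glue_prob; split; first exact: run_measure_glue.
apply/le_anti; rewrite prob_le1 //=; last exact: run_measurable_Parity.
have := le_trans glue_Parity_ge1 (glue_prob_Parity_le l B).
by rewrite -addrA lerDl addrC subr_ge0 -{1}[P C]mulr1 ler_pM2l.
Qed.

End ReachedCylinder.

Theorem lemma3 (R : realType) (V : finType) (E : rel V) (V0 V1 Vr : {set V})
  (l : nat) (B : nat -> {set V}) (v0 : V) (pi0 : seq V -> V -> R) :
  game_graph E V0 V1 Vr ->
  parity_condition E l B ->
  det_memoryless E V0 pi0 ->
  inf (prob_values E V0 V1 pi0 v0 (Parity l B)) = 1 ->
  forall ws : seq V,
    (exists pi1, strategy E V1 pi1 /\
       exists P, run_measure E V0 V1 pi0 pi1 v0 P /\ 0 < P (cyl (v0 :: ws))) ->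
  forall i : nat, (1 <= i <= l)%N -> odd i ->
    last v0 ws \in B i ->
    inf (prob_values E V0 V1 pi0 (last v0 ws) (lemma3_event l B i)) = 1.
Proof.
move=> _ _ mem0 inf_Parity ws [pi1 [hpi1 [P [hP reached]]]] i il io _.
rewrite lastI in reached; set x := last v0 ws in reached *.
have all1 y : prob_values E V0 V1 pi0 x (lemma3_event l B i) y -> y = 1.
  case=> pi1' [hpi1' [P' [hP' ->]]].
  apply: (prob_subset_eq1 (run_measure_probability hP') (run_measurable_Parity l B)).
  - exact: run_measurable_lemma3_event.
  - exact: Parity_sub_lemma3_event.
  - exact: (Parity_almost_sure_from_reached mem0 hP reached hP' hpi1 hpi1' inf_Parity).
have cond : prob_values E V0 V1 pi0 x (lemma3_event l B i)
    (cond_shift_prob x (belast v0 ws) P (lemma3_event l B i)).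
  exists (shift_strategy (belast v0 ws) pi1); split; first exact: strategy_shift.
  by eexists; split; first exact: run_measure_cond_shift mem0 hP reached.
suff -> : prob_values E V0 V1 pi0 x (lemma3_event l B i) = [set 1] by exact: inf1.
by apply/seteqP; split=> y; [exact: all1 | move=> ->; rewrite -(all1 _ cond)].
Qed.
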